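(* Let $d$ and $k$ be positive integers and let $p$ be the smallest positive integer such that $k<\kappa_p$. If $d$ is a proper divisor of $p$ (that is, $d$ divides $p$ and $d\ne p$) and either (i) $k-\kappa_{p-1}=p/d$, or (ii) $\kappa_p-k=p/d$, then $\delta_z(d,k)\neq\lfloor\lambda(d,k)\rfloor$.
   Context: A point of $\mathbb{Z}^d$ is primitive if its coordinates are relatively prime; $\mathbb{P}^d_\circ$ denotes the set of primitive points of $\mathbb{Z}^d$ whose first non-zero coordinate is positive. For a finite $\mathcal{X}\subset\mathbb{R}^d$, $\kappa(\mathcal{X})=\max_{1\le i\le d}\sum_{x\in\mathcal{X}}|x_i|$, and $\delta_z(d,k)=\max\{|\mathcal{X}|:\mathcal{X}\subset\mathbb{P}^d_\circ,\ \kappa(\mathcal{X})\le k\}$. $B(d,p)=\{x\in\mathbb{R}^d:\|x\|_1\le p\}$; for integers $p\ge0$, $N_p=|B(d,p)\cap\mathbb{P}^d_\circ|$ and $\kappa_p=\kappa(B(d,p)\cap\mathbb{P}^d_\circ)$ (so $N_0=\kappa_0=0$). With $p$ as in the claim, $\lambda(d,k)=N_{p-1}+\frac{d(k-\kappa_{p-1})}{p}$. *)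

From HB Require Import structures.
From mathcomp Require Import all_boot all_order all_algebra.
Set Implicit Arguments. Unset Strict Implicit. Unset Printing Implicit Defensive.
Import Order.TTheory GRing.Theory Num.Theory.
Local Open Scope int_scope.

Notation pt d := {ffun 'I_d -> int}.

Definition primitive d (x : pt d) : bool :=
  \big[gcdn/0%N]_(i < d) `|x i|%N == 1%N.

Definition first_nz_pos d (x : pt d) : bool :=
  [exists i : 'I_d, (0 < x i)%R && [forall j : 'I_d, (j < i)%N ==> (x j == 0)]].

Definition in_Pdo d (x : pt d) : bool := primitive x && first_nz_pos x.

Definition l1 d (x : pt d) : nat := \sum_(i < d) `|x i|%N.

(* kappa(X) = max_i sum_{x in X} |x_i|, for a finite set X given as a uniq seq *)
Definition kappa d (X : seq (pt d)) : nat :=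
  \max_(i < d) \sum_(x <- X) `|x i|%N.

(* All points of Z^d with coordinates in [-p, p] (a superset of B(d,p) cap Z^d). *)
Definition box d (p : nat) : seq (pt d) :=
  [seq [ffun i => ((f i)%:Z - p%:Z)%R] | f : {ffun 'I_d -> 'I_(p.*2.+1)}].

Definition ball_prim d (p : nat) : seq (pt d) :=
  [seq x <- box d p | in_Pdo x && (l1 x <= p)%N].

Definition N_ d (p : nat) : nat := size (ball_prim d p).
Definition kappa_ d (p : nat) : nat := kappa (ball_prim d p).

Definition admissible d (k : nat) (X : seq (pt d)) : Prop :=
  uniq X /\ all (@in_Pdo d) X /\ (kappa X <= k)%N.

Definition is_delta_z (d k m : nat) : Prop :=
  (exists X, admissible (d:=d) k X /\ size X = m) /\
  (forall X, admissible (d:=d) k X -> (size X <= m)%N).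

Definition lambda (d k p : nat) : rat :=
  ((N_ d p.-1)%:R + (d%:R * (k%:R - (kappa_ d p.-1)%:R)) / p%:R)%R.

(* The ball B(d,q) ∩ P^d_o is permuted by swapping two coordinates and then
   restoring the sign convention, so all its column sums equal κ_q and its total
   l1 mass is d κ_q; an admissible X has total l1 mass at most d k.  Trading the
   points of X outside the ball (mass above the radius) against the points of the
   ball missing from X (mass at most the radius) shows:
   (i)  if d k = d κ_{p-1} + p and |X| > N_{p-1}, then X is B(d,p-1) ∩ P^d_o plus
        one point y and every column sum of X is k, so |y_i| = k - κ_{p-1} for all i;
   (ii) if d κ_p = d k + p and |X| >= N_p - 1, then X is B(d,p) ∩ P^d_o minus one
        point y and every column sum of X is k, so |y_i| = κ_p - k for all i.
   A primitive point with constant |y_i| has |y_i| = 1, which gives p = d.  As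
   λ(d,k) is N_{p-1} + 1 in case (i) and N_p - 1 in case (ii), δ_z(d,k) misses
   ⌊λ(d,k)⌋. *)

From mathcomp Require Import all_boot all_order all_algebra.
From mathcomp Require Import fingroup perm zify ring lra.
From Stdlib Require Classical_Prop.
Import Order.TTheory GRing.Theory Num.Theory.
Set Implicit Arguments. Unset Strict Implicit. Unset Printing Implicit Defensive.

Lemma exchange_sum_bound (T : eqType) (w : T -> nat) t (X B : seq T) :
  uniq X -> uniq B -> {in B, forall x, w x <= t} ->
  {in X, forall x, x \notin B -> t < w x} ->
  \sum_(x <- B) w x + t * size X + count [predC B] X <= \sum_(x <- X) w x + t * size B.
Proof.
move=> X_uniq B_uniq w_B w_XB.
have common : perm_eq [seq x <- B | x \in X] [seq x <- X | x \in B].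
  by apply: uniq_perm; rewrite ?filter_uniq // => x; rewrite !mem_filter andbC.
have common_sum : \sum_(x <- B | x \in X) w x = \sum_(x <- X | x \in B) w x.
  by rewrite -[LHS]big_filter -[RHS]big_filter; apply: perm_big.
have common_count : count [in X] B = count [in B] X.
  by rewrite -!size_filter; apply: perm_size.
have out_X : t.+1 * count [predC B] X <= \sum_(x <- X | x \notin B) w x.
  rewrite -iter_addn_0 -big_const_seq big_seq_cond [leqRHS]big_seq_cond.
  by apply: leq_sum => x /andP[xX xB]; apply: w_XB.
have out_B : \sum_(x <- B | x \notin X) w x <= t * count [predC X] B.
  rewrite -iter_addn_0 -big_const_seq big_seq_cond [leqRHS]big_seq_cond.
  by apply: leq_sum => x /andP[xB _]; apply: w_B.
rewrite [\sum_(x <- B) _](bigID [in X]) [\sum_(x <- X) _](bigID [in B]) /= common_sum.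
rewrite -(count_predC [in B] X) -(count_predC [in X] B) common_count.
nia.
Qed.

Lemma perm_map_self (T : eqType) (f : T -> T) (s : seq T) :
  uniq s -> {in s &, injective f} -> {in s, forall x, f x \in s} -> perm_eq (map f s) s.
Proof.
move=> s_uniq f_inj f_s; have fs_uniq : uniq (map f s) by rewrite map_inj_in_uniq.
have fs_sub : {subset map f s <= s} by move=> _ /mapP[x xs ->]; apply: f_s.
apply: uniq_perm => //; apply: (uniq_min_size fs_uniq fs_sub _).2.
by rewrite size_map.
Qed.

Lemma sum_ord_eq_const n (c : 'I_n -> nat) k :
  (forall i, c i <= k) -> n * k <= \sum_(i < n) c i -> forall i, c i = k.
Proof.
move=> c_le sum_ge i; apply/eqP; rewrite eqn_leq c_le leqNgt; apply/negP => ci_lt.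
have rest : \sum_(j | j != i) c j <= #|[pred j | j != i]| * k.
  by rewrite -sum_nat_const; apply: leq_sum.
have n_gt0 : 0 < n by apply: leq_ltn_trans (ltn_ord i).
move: sum_ge rest; rewrite (bigD1 i) //= cardC1 card_ord; nia.
Qed.

Lemma subset_of_count_mem (T : eqType) (X B : seq T) :
  uniq X -> size B <= count [in B] X -> {subset B <= X}.
Proof.
move=> X_uniq B_le x xB; rewrite -size_filter in B_le.
have XB_sub : {subset [seq y <- X | y \in B] <= B} by move=> y; rewrite mem_filter => /andP[].
have [_ eqXB] := uniq_min_size (filter_uniq [in B] X_uniq) XB_sub B_le.
by move: xB; rewrite -eqXB mem_filter => /andP[].
Qed.

Lemma perm_cons_of_subset (T : eqType) (X B : seq T) :
  uniq X -> uniq B -> {subset B <= X} -> size X = (size B).+1 ->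
  exists2 y, y \in X & perm_eq X (y :: B).
Proof.
move=> X_uniq B_uniq BX sizeX.
have inB : perm_eq [seq x <- X | x \in B] B.
  apply: uniq_perm; rewrite ?filter_uniq // => x.
  by rewrite mem_filter andb_idr //; apply: BX.
have : size [seq x <- X | x \notin B] = 1.
  have := count_predC [in B] X.
  by rewrite -!size_filter (perm_size inB) sizeX -addn1 => /addnI.
case E : [seq x <- X | x \notin B] => [|y []] // _.
have : y \in [seq x <- X | x \notin B] by rewrite E mem_head.
rewrite mem_filter => /andP[_ yX].
exists y => //; rewrite -(perm_filterC [in B] X) /= E.
by rewrite perm_catC /= perm_cons.
Qed.

Lemma exists_max_bounded (P : nat -> Prop) b :
  P 0 -> (forall n, P n -> n <= b) -> exists m, P m /\ forall n, P n -> n <= m.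
Proof.
elim: b => [|b IHb] P0 P_le; first by exists 0; split=> // n /P_le.
have [Pb1|notPb1] := Classical_Prop.classic (P b.+1); first by exists b.+1.
apply: IHb => // n Pn; have := P_le n Pn; rewrite leq_eqVlt => /orP[/eqP n_eq|//].
by move: Pn; rewrite n_eq.
Qed.

Lemma floor_neq_of_succ_le (R : archiFieldType) (m : nat) (l : R) :
  ((m.+1)%:R <= l)%R -> (Posz m != Num.floor l)%R.
Proof.
move=> m_lt; apply/eqP => m_floor.
have : (Posz m.+1 <= Num.floor l)%R by rewrite floor_ge_int.
by rewrite -m_floor; lia.
Qed.

Section Exchange.
Variables (T : eqType) (w : T -> nat) (t : nat) (X B : seq T).
Hypotheses (X_uniq : uniq X) (B_uniq : uniq B).
Hypothesis w_B : {in B, forall x, w x <= t}.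
Hypothesis w_XB : {in X, forall x, x \notin B -> t < w x}.

Lemma count_mem_le_size : count [in B] X <= size B.
Proof.
rewrite -size_filter; apply: uniq_leq_size; first exact: filter_uniq.
by move=> x; rewrite mem_filter => /andP[].
Qed.

Lemma exchange_add_one : size B < size X ->
  \sum_(x <- X) w x <= \sum_(x <- B) w x + t.+1 ->
  \sum_(x <- X) w x = \sum_(x <- B) w x + t.+1 /\ exists2 y, y \in X & perm_eq X (y :: B).
Proof.
move=> X_gt sum_le; have := count_predC [in B] X; have := count_mem_le_size.
have mono : t * (size B).+1 <= t * size X by rewrite leq_mul2l X_gt orbT.
move: (exchange_sum_bound X_uniq B_uniq w_B w_XB) mono.
rewrite mulnS => exch mono in_le split_X.
have [sizeX in_ge] : size X = (size B).+1 /\ size B <= count [in B] X by lia.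
split; first by lia.
exact: perm_cons_of_subset X_uniq B_uniq (subset_of_count_mem X_uniq in_ge) sizeX.
Qed.

Lemma exchange_sub_one : 0 < t -> size B <= (size X).+1 ->
  \sum_(x <- X) w x + t <= \sum_(x <- B) w x ->
  \sum_(x <- X) w x + t = \sum_(x <- B) w x /\ exists2 y, y \in B & perm_eq B (y :: X).
Proof.
move=> t_gt0 B_le sum_le.
have mono : t * size B <= t * (size X).+1 by rewrite leq_mul2l B_le orbT.
move: (exchange_sum_bound X_uniq B_uniq w_B w_XB) mono.
rewrite mulnS => exch mono.
have [sizeB out0] : size B = (size X).+1 /\ count [predC B] X = 0 by nia.
split; first by lia.
apply: perm_cons_of_subset B_uniq X_uniq _ sizeB => x xX.
apply/negPn/negP => xB; have : has [predC B] X by apply/hasP; exists x.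
by rewrite has_count out0.
Qed.

End Exchange.

Section Points.
Variable d : nat.
Implicit Types (x y : pt d) (X B : seq (pt d)).

Definition pt_swap (i j : 'I_d) x : pt d := [ffun t => x (tperm i j t)].

Definition normalize x : pt d := if first_nz_pos x then x else (- x)%R.

Definition swap_normalize (i j : 'I_d) x : pt d := normalize (pt_swap i j x).

Lemma abs_le_l1 x i : (`|x i| <= l1 x)%N.
Proof. by rewrite /l1 (bigD1 i) //= leq_addr. Qed.

Lemma mem_box q x : (l1 x <= q)%N -> x \in box d q.
Proof.
move=> x_le; pose f : {ffun 'I_d -> 'I_(q.*2.+1)} := [ffun i => inord `|(x i + q%:Z)%R|%N].
have -> : x = [ffun i => ((f i)%:Z - q%:Z)%R].
  apply/ffunP => i; have xi_le := leq_trans (abs_le_l1 x i) x_le.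
  rewrite !ffunE inordK; last by lia.
  by rewrite abszE ger0_norm ?addrK //; lia.
exact: image_f.
Qed.

Lemma box_uniq q : uniq (box d q).
Proof.
rewrite map_inj_uniq ?enum_uniq // => f g /ffunP fg.
by apply/ffunP => i; apply: val_inj; have := fg i; rewrite !ffunE /=; lia.
Qed.

Lemma mem_ball_prim q x : (x \in ball_prim d q) = in_Pdo x && (l1 x <= q)%N.
Proof.
rewrite mem_filter; case/boolP: (in_Pdo x && _) => //= /andP[_ x_le].
exact: mem_box.
Qed.

Lemma ball_prim_uniq q : uniq (ball_prim d q).
Proof. by rewrite filter_uniq ?box_uniq. Qed.

Lemma primitive_neq0 x : primitive x -> x != 0%R.
Proof. by apply: contraTneq => ->; rewrite /primitive big1 // => i _; rewrite ffunE. Qed.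

Lemma exists_first_nz x : x != 0%R ->
  exists i, x i != 0%R /\ forall j : 'I_d, (j < i)%N -> x j = 0%R.
Proof.
move=> x_neq0; have [i xi_neq0] : exists i, x i != 0%R.
  apply/existsP; apply: contraNT x_neq0 => /existsPn xi0.
  by apply/eqP/ffunP => i; rewrite ffunE; apply/eqP/negPn.
case: (@arg_minnP _ i (fun t => x t != 0%R) val xi_neq0) => i0 xi0_neq0 i0_min.
by exists i0; split=> // j j_lt; apply/eqP/negPn/negP => /i0_min; rewrite leqNgt j_lt.
Qed.

Lemma first_nz_pos_at x i : x i != 0%R -> (forall j : 'I_d, (j < i)%N -> x j = 0%R) ->
  first_nz_pos x = (0 < x i)%R.
Proof.
move=> xi_neq0 below_i; apply/existsP/idP => [[i' /andP[xi'_gt0 /forallP below_i']]|xi_gt0].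
  case: (ltngtP i i') => [lt_ii'|lt_i'i|/val_inj -> //].
    by move: xi_neq0; have /implyP/(_ lt_ii') -> := below_i' i.
  by move: xi'_gt0; rewrite below_i ?ltxx.
by exists i; rewrite xi_gt0; apply/forallP => j; apply/implyP => /below_i ->.
Qed.

Lemma first_nz_pos_opp x : x != 0%R -> first_nz_pos (- x)%R = ~~ first_nz_pos x.
Proof.
case/exists_first_nz => i [xi_neq0 below_i].
rewrite (first_nz_pos_at xi_neq0 below_i) (@first_nz_pos_at _ i); first last.
- by move=> j /below_i; rewrite ffunE => ->; rewrite oppr0.
- by rewrite ffunE oppr_eq0.
by rewrite ffunE oppr_gt0 ltNge le_eqVlt eq_sym (negPf xi_neq0).
Qed.

Lemma normalize_id x : first_nz_pos x -> normalize x = x.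
Proof. by rewrite /normalize => ->. Qed.

Lemma normalize_opp x : x != 0%R -> normalize (- x)%R = normalize x.
Proof.
by move=> x_neq0; rewrite /normalize first_nz_pos_opp //; case: first_nz_pos; rewrite /= ?opprK.
Qed.

Lemma first_nz_pos_normalize x : x != 0%R -> first_nz_pos (normalize x).
Proof. by move=> x_neq0; rewrite /normalize; case: ifPn; rewrite ?first_nz_pos_opp. Qed.

Lemma abs_normalize x t : `|normalize x t|%N = `|x t|%N.
Proof. by rewrite /normalize; case: ifP; rewrite ?ffunE ?abszN. Qed.

Lemma pt_swapK i j : involutive (pt_swap i j).
Proof. by move=> x; apply/ffunP => t; rewrite !ffunE tpermK. Qed.

Lemma pt_swap_opp i j x : pt_swap i j (- x)%R = (- pt_swap i j x)%R.
Proof. by apply/ffunP => t; rewrite !ffunE. Qed.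

Lemma abs_swap_normalize i j x t :
  `|swap_normalize i j x t|%N = `|x (tperm i j t)|%N.
Proof. by rewrite abs_normalize ffunE. Qed.

Lemma primitive_abs_perm (s : {perm 'I_d}) x y :
  (forall t, `|y t|%N = `|x (s t)|%N) -> primitive y = primitive x.
Proof.
move=> yx; rewrite /primitive [in RHS](reindex_inj (@perm_inj _ s)).
by congr (_ == _); apply: eq_bigr.
Qed.

Lemma l1_abs_perm (s : {perm 'I_d}) x y :
  (forall t, `|y t|%N = `|x (s t)|%N) -> l1 y = l1 x.
Proof. by move=> yx; rewrite /l1 [in RHS](reindex_inj (@perm_inj _ s)); apply: eq_bigr. Qed.

Lemma in_Pdo_swap_normalize i j x : in_Pdo x -> in_Pdo (swap_normalize i j x).
Proof.
case/andP => prim_x _; have prim_sx := primitive_abs_perm (abs_swap_normalize i j x).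
rewrite /in_Pdo prim_sx prim_x first_nz_pos_normalize // primitive_neq0 //.
by rewrite (@primitive_abs_perm (tperm i j) x) // => t; rewrite ffunE.
Qed.

Lemma swap_normalizeK i j : {in in_Pdo (d:=d), involutive (swap_normalize i j)}.
Proof.
move=> x /andP[/primitive_neq0 x_neq0 x_pos]; rewrite /swap_normalize {2}/normalize.
by case: ifP; rewrite ?pt_swap_opp pt_swapK ?normalize_opp // normalize_id.
Qed.

Lemma swap_normalize_ball_prim q i j :
  perm_eq (map (swap_normalize i j) (ball_prim d q)) (ball_prim d q).
Proof.
apply: perm_map_self (ball_prim_uniq q) _ _ => [x y|x]; rewrite !mem_ball_prim.
  case/andP=> Px _ /andP[Py _] eq_xy.
  by rewrite -(swap_normalizeK i j Px) eq_xy swap_normalizeK.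
case/andP=> Px x_le; rewrite in_Pdo_swap_normalize //.
by rewrite (l1_abs_perm (abs_swap_normalize i j x)).
Qed.

Definition colsum X (i : 'I_d) : nat := \sum_(x <- X) `|x i|%N.

Lemma colsum_ball_prim_eq q i j : colsum (ball_prim d q) i = colsum (ball_prim d q) j.
Proof.
rewrite /colsum -(perm_big _ (swap_normalize_ball_prim q j i)) big_map.
by apply: eq_bigr => x _; rewrite abs_swap_normalize tpermR.
Qed.

Lemma colsum_le_kappa X i : (colsum X i <= kappa X)%N.
Proof. exact: (leq_bigmax_cond (F := colsum X)). Qed.

Lemma kappa_ball_prim q i : kappa_ d q = colsum (ball_prim d q) i.
Proof.
apply/eqP; rewrite eqn_leq colsum_le_kappa andbT.
by apply/bigmax_leqP => j _; rewrite -/(colsum _ j) (colsum_ball_prim_eq q j i).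
Qed.

Lemma sum_l1_colsum X : \sum_(x <- X) l1 x = \sum_(i < d) colsum X i.
Proof. exact: exchange_big. Qed.

Lemma sum_l1_le_kappa X : (\sum_(x <- X) l1 x <= d * kappa X)%N.
Proof.
rewrite sum_l1_colsum -[d in (d * _)%N]card_ord -sum_nat_const.
by apply: leq_sum => i _; apply: colsum_le_kappa.
Qed.

Lemma sum_l1_ball_prim q : \sum_(x <- ball_prim d q) l1 x = (d * kappa_ d q)%N.
Proof.
rewrite sum_l1_colsum -[d in (d * _)%N]card_ord -sum_nat_const.
by apply: eq_bigr => i _; rewrite (kappa_ball_prim q i).
Qed.

Lemma colsum_eq_of_sum_l1 X k : (kappa X <= k)%N -> (d * k <= \sum_(x <- X) l1 x)%N ->
  forall i, colsum X i = k.
Proof.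
move=> kappa_le; rewrite sum_l1_colsum; apply: sum_ord_eq_const => i.
exact: leq_trans (colsum_le_kappa X i) kappa_le.
Qed.

Lemma primitive_const_abs x c : (forall i, `|x i|%N = c) -> primitive x -> c = 1%N.
Proof.
move=> x_c /eqP gcd_x; apply/eqP; rewrite -dvdn1 -gcd_x.
by apply/dvdn_biggcdP => i _; rewrite x_c.
Qed.

Lemma primitive_colsum_gap X B y a b : primitive y -> perm_eq X (y :: B) ->
  (forall i, colsum X i = a) -> (forall i, colsum B i = b) -> a = b.+1.
Proof.
move=> prim_y XyB X_a B_b.
have y_ab i : `|y i|%N + b = a by rewrite -(X_a i) -(B_b i) /colsum (perm_big _ XyB) big_cons.
have [i0 _] := exists_first_nz (primitive_neq0 prim_y).
have y_1 : (a - b = 1)%N by apply: (@primitive_const_abs y) => // i; rewrite -(y_ab i) addnK.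
by have := y_ab i0; lia.
Qed.

Definition sphere_prim q : seq (pt d) := [seq x <- ball_prim d q | l1 x == q].

Lemma perm_ball_prim_sphere q : (0 < q)%N ->
  perm_eq (ball_prim d q) (ball_prim d q.-1 ++ sphere_prim q).
Proof.
move=> q_gt0; apply: uniq_perm; first exact: ball_prim_uniq.
  rewrite cat_uniq !filter_uniq ?box_uniq // andbT.
  apply/hasPn => x; rewrite mem_filter mem_ball_prim => /andP[/eqP l1_x _].
  by rewrite mem_ball_prim l1_x; case: (in_Pdo x) => //=; lia.
move=> x; rewrite mem_cat [x \in sphere_prim q]mem_filter !mem_ball_prim.
by case: (in_Pdo x) => //=; apply/idP/idP; lia.
Qed.

Lemma sum_l1_sphere q : \sum_(x <- sphere_prim q) l1 x = (q * size (sphere_prim q))%N.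
Proof.
rewrite (eq_big_seq (fun=> q)) => [|x]; last by rewrite mem_filter => /andP[/eqP].
by rewrite big_const_seq count_predT iter_addn_0 mulnC.
Qed.

Lemma is_delta_z_exists k b : (forall X, admissible k X -> (size X <= b)%N) ->
  exists m, is_delta_z d k m.
Proof.
move=> size_le.
pose P n := exists X, admissible k X /\ size X = n.
have [||m [[X [X_adm X_m]] m_max]] := @exists_max_bounded P b.
- exists [::]; do 3!split=> //.
  by apply/bigmax_leqP => i _; rewrite big_nil.
- by move=> _ [X [X_adm <-]]; apply: size_le.
by exists m; split=> [|Y Y_adm]; [exists X | apply: m_max; exists Y].
Qed.

Lemma admissible_size_le_N_pred k p X : (0 < p)%N -> (d * k = d * kappa_ d p.-1 + p)%N ->
  d != p -> admissible k X -> (size X <= N_ d p.-1)%N.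
Proof.
case: p => [//|q] _ /= dk d_neq_p [X_uniq [X_prim X_kappa]].
rewrite leqNgt /N_; set B := ball_prim d q; apply/negP => X_gt.
have B_le : {in B, forall x, (l1 x <= q)%N} by move=> x; rewrite mem_ball_prim => /andP[].
have XB_gt : {in X, forall x, x \notin B -> (q < l1 x)%N}.
  by move=> x xX; rewrite mem_ball_prim (allP X_prim x xX) -ltnNge.
have sum_le : (\sum_(x <- X) l1 x <= \sum_(x <- B) l1 x + q.+1)%N.
  rewrite sum_l1_ball_prim -dk; apply: leq_trans (sum_l1_le_kappa X) _.
  by rewrite leq_mul2l X_kappa orbT.
have [sum_eq [y yX XyB]] := exchange_add_one X_uniq (ball_prim_uniq q) B_le XB_gt X_gt sum_le.
have sum_X : (d * k <= \sum_(x <- X) l1 x)%N by rewrite sum_eq sum_l1_ball_prim dk.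
have k_eq := primitive_colsum_gap (proj1 (andP (allP X_prim y yX))) XyB
  (colsum_eq_of_sum_l1 X_kappa sum_X) (fun i => esym (kappa_ball_prim q i)).
by move/eqP: d_neq_p; apply; move: dk; rewrite k_eq mulnS addnC => /addnI.
Qed.

Lemma admissible_size_add2_le_N k p X : (0 < p)%N -> (d * kappa_ d p = d * k + p)%N ->
  d != p -> admissible k X -> ((size X).+2 <= N_ d p)%N.
Proof.
move=> p_gt0 dk d_neq_p [X_uniq [X_prim X_kappa]].
rewrite leqNgt ltnS /N_; set B := ball_prim d p; apply/negP => B_le_X.
have B_le : {in B, forall x, (l1 x <= p)%N} by move=> x; rewrite mem_ball_prim => /andP[].
have XB_gt : {in X, forall x, x \notin B -> (p < l1 x)%N}.
  by move=> x xX; rewrite mem_ball_prim (allP X_prim x xX) -ltnNge.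
have sum_le : (\sum_(x <- X) l1 x + p <= \sum_(x <- B) l1 x)%N.
  rewrite sum_l1_ball_prim dk leq_add2r; apply: leq_trans (sum_l1_le_kappa X) _.
  by rewrite leq_mul2l X_kappa orbT.
have [sum_eq [y yB ByX]] :=
  exchange_sub_one X_uniq (ball_prim_uniq p) B_le XB_gt p_gt0 B_le_X sum_le.
have sum_X : (d * k <= \sum_(x <- X) l1 x)%N.
  by move: sum_eq; rewrite sum_l1_ball_prim dk => /addIn ->.
have /andP[/andP[prim_y _] _] : in_Pdo y && (l1 y <= p)%N by rewrite -mem_ball_prim.
have kappa_eq := primitive_colsum_gap prim_y ByX (fun i => esym (kappa_ball_prim p i))
  (colsum_eq_of_sum_l1 X_kappa sum_X).
by move/eqP: d_neq_p; apply; move: dk; rewrite kappa_eq mulnS addnC => /addnI.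
Qed.

End Points.

Section Lambda.
Variable d : nat.
Local Open Scope ring_scope.

Lemma natr_sub_eq_div a b p : (0 < d)%N -> (a%:R - b%:R = p%:R / d%:R :> rat) ->
  (d * a = d * b + p)%N.
Proof.
move=> d_gt0 ab; have d_neq0 : (d%:R != 0 :> rat) by rewrite pnatr_eq0 -lt0n.
apply/eqP; rewrite -(eqr_nat rat) natrD !natrM; apply/eqP.
by rewrite -[p%:R](divfK d_neq0) -ab; ring.
Qed.

Lemma lambda_eq_N_pred_succ k p : (0 < p)%N -> (d * k = d * kappa_ d p.-1 + p)%N ->
  lambda d k p = (N_ d p.-1).+1%:R.
Proof.
move=> p_gt0 dk; have p_neq0 : (p%:R != 0 :> rat) by rewrite pnatr_eq0 -lt0n.
by rewrite /lambda mulrBr -!natrM dk natrD addrAC subrr add0r divff // natr1.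
Qed.

Lemma lambda_add1_eq_N k p : (0 < p)%N -> (d * kappa_ d p = d * k + p)%N ->
  lambda d k p + 1 = (N_ d p)%:R.
Proof.
move=> p_gt0 dk; have shell := perm_ball_prim_sphere d p_gt0.
set s := size (sphere_prim d p).
have N_eq : N_ d p = (N_ d p.-1 + s)%N by rewrite /N_ (perm_size shell) size_cat.
have kappa_eq : (d * k + p = d * kappa_ d p.-1 + p * s)%N.
  by rewrite -dk -!sum_l1_ball_prim (perm_big _ shell) big_cat sum_l1_sphere.
have p_neq0 : (p%:R != 0 :> rat) by rewrite pnatr_eq0 -lt0n.
have scaled : (d%:R * (k%:R - (kappa_ d p.-1)%:R) = p%:R * (s%:R - 1) :> rat).
  have := congr1 (fun n => n%:R : rat) kappa_eq; rewrite /= !natrD !natrM.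
  by rewrite mulrBr mulrBr mulr1; lra.
by rewrite /lambda scaled N_eq natrD; field.
Qed.

End Lambda.

Theorem lemma3p2 (d k p : nat) :
  (0 < d)%N -> (0 < k)%N ->
  (0 < p)%N -> (k < kappa_ d p)%N ->
  (forall q : nat, (0 < q)%N -> (q < p)%N -> (kappa_ d q <= k)%N) ->
  (d %| p)%N -> d != p ->
  ((k%:R - (kappa_ d p.-1)%:R = p%:R / d%:R :> rat)%R \/
   ((kappa_ d p)%:R - k%:R = p%:R / d%:R :> rat)%R) ->
  exists m : nat, is_delta_z d k m /\ (Posz m != Num.floor (lambda d k p))%R.
Proof.
move=> d_gt0 _ p_gt0 _ _ _ d_neq_p [gap_below|gap_above].
- have dk := natr_sub_eq_div d_gt0 gap_below.
  have size_le X := @admissible_size_le_N_pred d k p X p_gt0 dk d_neq_p.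
  have [m delta_m] := is_delta_z_exists size_le.
  exists m; split=> //; have [[X [X_adm <-]] _] := delta_m.
  apply: floor_neq_of_succ_le; rewrite (lambda_eq_N_pred_succ p_gt0 dk) ler_nat ltnS.
  exact: size_le.
- have dk := natr_sub_eq_div d_gt0 gap_above.
  have size_le X := @admissible_size_add2_le_N d k p X p_gt0 dk d_neq_p.
  have [m delta_m] := is_delta_z_exists (fun X X_adm => ltnW (ltnW (size_le X X_adm))).
  exists m; split=> //; have [[X [X_adm <-]] _] := delta_m.
  apply: floor_neq_of_succ_le; rewrite -(lerD2r 1) lambda_add1_eq_N // natr1 ler_nat.
  exact: size_le.
Qed.
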